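(* Let $(X,(\cdot,\cdot))$ be a real finite-dimensional Hilbert space, let $\delta>0$, and let $L,G\in\mathfrak{L}_+(X)$ satisfy $\min\big(d_\sigma(L^{-1},G),\,d_\sigma(L,G^{-1})\big)\leqslant\delta$. Then the spectral radius of $I-LG$ satisfies $$\rho(I-LG)\leqslant\frac{e^\delta-1}{\delta}\,\min\big(d_\sigma(L^{-1},G),\,d_\sigma(L,G^{-1})\big).$$
   Context: $\mathfrak{L}_+(X)=\{T\in\mathfrak{L}(X):(Tu,u)>0\ \forall u\in X\setminus\{0\}\}$ (operators with positive definite symmetric part). For $S,T\in\mathfrak{L}_+(X)$, $W(S,T)=\{(S_{\mathbb C}w,w)/(T_{\mathbb C}w,w): w\in X^{\mathbb C}\setminus\{0\}\}$, where $X^{\mathbb C}$ is the complexification of $X$ and $T_{\mathbb C}(u+\mathbf{i}v)=Tu+\mathbf{i}Tv$; the spectral distance is $d_\sigma(S,T)=\sup\{|\ln z|: z\in W(S,T)\}$ with $\ln$ the principal branch on $\mathbb{C}\setminus(-\infty,0]$. *)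

From HB Require Import structures.
From mathcomp Require Import all_boot all_order all_algebra.
From mathcomp Require Import all_classical all_reals all_analysis.
Set Implicit Arguments. Unset Strict Implicit. Unset Printing Implicit Defensive.
Import Order.TTheory GRing.Theory Num.Theory.
Local Open Scope ring_scope.
Local Open Scope classical_set_scope.

Section Defs.
Variables (R : realType) (n : nat).

(* X = R^n (column vectors) with a general inner product (u,v) = u^T Q v,
   Q symmetric positive definite; operators are n x n matrices acting by T *m u. *)
Definition ip (Q : 'M[R]_n) (u v : 'cV[R]_n) : R := (u^T *m Q *m v) 0 0.

Definition is_inner_product (Q : 'M[R]_n) : Prop :=
  Q^T = Q /\ forall u : 'cV[R]_n, u != 0 -> 0 < ip Q u u.

Definition Lplus (Q : 'M[R]_n) (T : 'M[R]_n) : Prop :=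
  forall u : 'cV[R]_n, u != 0 -> 0 < ip Q (T *m u) u.

(* complex numbers as pairs (re, im) *)
Definition cdiv (z w : R * R) : R * R :=
  let: (a, b) := z in let: (c, d) := w in
  ((a * c + b * d) / (c ^+ 2 + d ^+ 2), (b * c - a * d) / (c ^+ 2 + d ^+ 2)).
Definition cabs (z : R * R) : R := Num.sqrt (z.1 ^+ 2 + z.2 ^+ 2).
(* principal argument, valid on C \ (-oo,0] *)
Definition carg (z : R * R) : R := 2 * atan (z.2 / (cabs z + z.1)).
Definition cLn (z : R * R) : R * R := (ln (cabs z), carg z).
Definition absLn (z : R * R) : R := cabs (cLn z).

(* (T_C w, w) for w = u + i v, complexified inner product
   (x1 + i y1, x2 + i y2) = (x1,x2) + (y1,y2) + i((y1,x2) - (x1,y2)) *)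
Definition qfC (Q T : 'M[R]_n) (u v : 'cV[R]_n) : R * R :=
  (ip Q (T *m u) u + ip Q (T *m v) v, ip Q (T *m v) u - ip Q (T *m u) v).

Definition Wset (Q S T : 'M[R]_n) : set (R * R) :=
  [set z | exists u v : 'cV[R]_n, (u != 0 \/ v != 0) /\ z = cdiv (qfC Q S u v) (qfC Q T u v)].

Definition dsigma (Q S T : 'M[R]_n) : R := sup [set absLn z | z in Wset Q S T].

(* complex eigenvalues a + i b of A (acting on the complexification) *)
Definition ceigen (A : 'M[R]_n) (z : R * R) : Prop :=
  exists x y : 'cV[R]_n, (x != 0 \/ y != 0) /\
    A *m x = z.1 *: x - z.2 *: y /\ A *m y = z.2 *: x + z.1 *: y.

Definition specrad (A : 'M[R]_n) : R := sup [set cabs z | z in ceigen A].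

End Defs.

(* Let l be an eigenvalue of L G with (complex) eigenvector w. Then G w = l L^-1 w and
   L (G w) = l G^-1 (G w), so 1/l lies in W(L^-1, G) and l in W(L, G^-1); positivity of
   the quadratic forms keeps l off (-oo, 0], and |Ln (1/l)| = |Ln l|, so |Ln l| is at most
   both spectral distances. The eigenvalue 1 - l of I - L G then satisfies
   |1 - l| = |e^(Ln l) - 1| <= e^|Ln l| - 1 <= (e^delta - 1)/delta |Ln l| by convexity of
   exp. Finite dimension enters through the coercivity of positive definite forms, which
   bounds W and so makes the spectral distances genuine suprema. *)

From HB Require Import structures.
From mathcomp Require Import all_boot all_order all_algebra.
From mathcomp Require Import all_classical all_reals all_analysis.
From mathcomp Require Import ring lra.
Import Order.TTheory GRing.Theory Num.Theory.
Import numFieldNormedType.Exports.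
Local Open Scope ring_scope.
Local Open Scope classical_set_scope.
Set Implicit Arguments. Unset Strict Implicit.

Section real_inequalities.
Variable R : realType.

Lemma abs_sin_le (x : R) : `|sin x| <= `|x|.
Proof.
have sin_le (y : R) : 0 < y -> `|sin y| <= y.
  move=> y0; have [c _ /=] := @MVT R sin cos 0 y y0 (fun x _ => is_derive_sin x)
    (continuous_subspaceT (@continuous_sin R)).
  rewrite sin0 !subr0 => ->.
  by rewrite normrM (gtr0_norm y0) ler_piMl ?cos_max ?ltW.
have [x0|x0|->] := ltgtP x 0; last by rewrite sin0 normr0.
  by rewrite -normrN -sinN (ltr0_norm x0); apply: sin_le; rewrite oppr_gt0.
by rewrite (gtr0_norm x0); exact: sin_le.
Qed.

Lemma one_sub_cos_le (t : R) : 1 - cos t <= t ^+ 2 / 2.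
Proof.
have -> : 1 - cos t = 2 * sin (t / 2) ^+ 2.
  rewrite [in cos t](splitr t) cosD -!expr2; have := cos2Dsin2 (t / 2); lra.
have h : sin (t / 2) ^+ 2 <= (t / 2) ^+ 2.
  by rewrite -real_normK ?num_real // -[(t / 2) ^+ 2]real_normK ?num_real //
    lerXn2r ?nnegrE // abs_sin_le.
have -> : t ^+ 2 / 2 = 2 * (t / 2) ^+ 2 by field.
by rewrite ler_pM2l.
Qed.

Lemma abs_ln_le (x : R) : 0 < x -> `|ln x| <= x + x^-1.
Proof.
move=> x0; have xi0 : 0 < x^-1 by rewrite invr_gt0.
have h1 : 1 + ln x <= x by have := expR_ge1Dx (ln x); rewrite lnK // posrE.
have h2 : 1 + ln x^-1 <= x^-1 by have := expR_ge1Dx (ln x^-1); rewrite lnK // posrE.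
rewrite lnV ?posrE // in h2.
rewrite ler_norml; apply/andP; split; lra.
Qed.

(* For w = s + i t, the left-hand side bounds |e^w - 1|^2 (via 2(1 - cos t) <= t^2),
   so this is the real form of |e^w - 1| <= e^|w| - 1. *)
Lemma expR_sub1_sqr_le (s t : R) :
  (expR s - 1) ^+ 2 + expR s * t ^+ 2 <= (expR (Num.sqrt (s ^+ 2 + t ^+ 2)) - 1) ^+ 2.
Proof.
set rho := Num.sqrt _.
have rho0 : 0 <= rho by exact: sqrtr_ge0.
have rho2 : rho ^+ 2 = s ^+ 2 + t ^+ 2 by rewrite sqr_sqrtr // addr_ge0 // sqr_ge0.
have A1 := expR_ge1Dx s; have A0 := expR_gt0 s; have E1 := expR_ge1Dx rho.
have rs : s <= rho by nra.
have [s0|s0] := leP 0 s.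
  have Ege : expR s * (1 + (rho - s)) <= expR rho.
    by rewrite -[X in _ <= expR X](subrKC s) expRD ler_wpM2l ?(ltW A0) ?expR_ge1Dx.
  set A := expR s in A1 A0 Ege *; set E := expR rho in E1 Ege *.
  have h1 : 0 <= (A - 1) + A * (rho - s) by nra.
  have h2 : ((A - 1) + A * (rho - s)) ^+ 2 <= (E - 1) ^+ 2.
    have hp : (A - 1) + A * (rho - s) <= E - 1 by nra.
    nra.
  have h3 : (A - 1) ^+ 2 + A * t ^+ 2 <= ((A - 1) + A * (rho - s)) ^+ 2.
    have -> : t ^+ 2 = (rho - s) * (rho + s) by nra.
    have h4 : 0 <= 2 * (A - 1) + A * (rho - s) - (rho + s) by nra.
    have h5 : 0 <= A * (rho - s) by nra.
    nra.
  lra.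
set A := expR s in A1 A0 *; set E := expR rho in E1 *.
have As : A <= 1 by rewrite /A -expR0 ler_expR ltW.
have h1 : (A - 1) ^+ 2 <= s ^+ 2 by nra.
have h2 : A * t ^+ 2 <= t ^+ 2 by have := sqr_ge0 t; nra.
have h3 : rho ^+ 2 <= (E - 1) ^+ 2 by nra.
lra.
Qed.

Lemma expR_sub1_le_chord (r d : R) : 0 <= r -> r <= d -> 0 < d ->
  expR r - 1 <= r / d * (expR d - 1).
Proof.
move=> r0 rd d0.
have t0 : 0 <= r / d by rewrite divr_ge0 // ltW.
have t1 : r / d <= 1 by rewrite ler_pdivrMr // mul1r.
have := convex_expR (Itv01 t0 t1) d 0.
rewrite !convRE /= mulr0 addr0 expR0 mulr1 divfK ?gt_eqF //.
rewrite /unstable.onem; lra.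
Qed.

Lemma sup_le_nonneg (E : set R) c : (forall y, E y -> y <= c) -> 0 <= c -> sup E <= c.
Proof.
move=> h c0; have [[y Ey]|ne] := pselect (E !=set0).
  by apply: ge_sup; [exists y | move=> z /h].
by rewrite (_ : E = set0) ?sup0 //; apply/seteqP; split => // z Ez; apply: ne; exists z.
Qed.

End real_inequalities.

Section complex_pairs.
Variable R : realType.
Implicit Types z w : R * R.

Definition cmul z w : R * R := (z.1 * w.1 - z.2 * w.2, z.2 * w.1 + z.1 * w.2).
Definition cinv z : R * R :=
  (z.1 / (z.1 ^+ 2 + z.2 ^+ 2), - z.2 / (z.1 ^+ 2 + z.2 ^+ 2)).

Lemma cabs_ge0 z : 0 <= cabs z.
Proof. exact: sqrtr_ge0. Qed.

Lemma cabs_sqr z : cabs z ^+ 2 = z.1 ^+ 2 + z.2 ^+ 2.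
Proof. by rewrite sqr_sqrtr // addr_ge0 // sqr_ge0. Qed.

Lemma re_le_cabs z : z.1 <= cabs z.
Proof. by have := cabs_sqr z; have := cabs_ge0 z; have := sqr_ge0 z.2; nra. Qed.

Lemma cabs_le_norm z : cabs z <= `|z.1| + `|z.2|.
Proof.
rewrite -[leRHS]ger0_norm ?addr_ge0 // -sqrtr_sqr ler_sqrt ?sqr_ge0 //.
rewrite -[z.1 ^+ 2]real_normK ?num_real // -[z.2 ^+ 2]real_normK ?num_real //.
by have := normr_ge0 z.1; have := normr_ge0 z.2; nra.
Qed.

Lemma cabs_gt0 z : 0 < cabs z + z.1 -> 0 < cabs z.
Proof.
move=> hp; rewrite lt_def cabs_ge0 andbT; apply/eqP => r0.
by have := cabs_sqr z; rewrite r0 in hp *; have := sqr_ge0 z.2; nra.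
Qed.

Lemma cabs_cdiv z w : 0 < w.1 -> cabs (cdiv z w) = cabs z / cabs w.
Proof.
case: z => a b; case: w => c d /= c0.
have m0 : 0 < c ^+ 2 + d ^+ 2 by have := sqr_ge0 d; nra.
rewrite /cabs /cdiv /= -sqrtrV ?ltW // -sqrtrM ?addr_ge0 ?sqr_ge0 //; congr Num.sqrt.
by field; rewrite gt_eqF.
Qed.

Lemma cdiv_cmull z w : 0 < w.1 -> cdiv (cmul z w) w = z.
Proof.
case: z => a b; case: w => c d /= c0.
have m0 : c ^+ 2 + d ^+ 2 != 0 by rewrite gt_eqF //; have := sqr_ge0 d; nra.
by rewrite /cdiv /=; congr (_, _); field.
Qed.

Lemma cdiv_cmulr z w : 0 < w.1 -> 0 < cabs z -> cdiv w (cmul z w) = cinv z.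
Proof.
move=> c0 z0; have m1 : z.1 ^+ 2 + z.2 ^+ 2 != 0 by rewrite -cabs_sqr expf_neq0 // gt_eqF.
case: z m1 {z0} => a b; case: w c0 => c d /= c0 m1.
have m0 : c ^+ 2 + d ^+ 2 != 0 by rewrite gt_eqF //; have := sqr_ge0 d; nra.
have -> : (a * c - b * d) ^+ 2 + (b * c + a * d) ^+ 2 =
          (a ^+ 2 + b ^+ 2) * (c ^+ 2 + d ^+ 2) by ring.
by rewrite /cdiv /cinv /=; congr (_, _); field; rewrite m0 m1.
Qed.

Lemma cabs_add_re_gt0 z w : 0 < w.1 -> 0 < (cmul z w).1 -> 0 < cabs z + z.1.
Proof.
case: z => X Y; case: w => N1 N2 /= h1 h2.
have r2 := cabs_sqr (X, Y); have r0 := cabs_ge0 (X, Y); rewrite /= in r2.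
set r := cabs (X, Y) in r2 r0 *.
have [Y0|Y0] := eqVneq Y 0.
  rewrite Y0 mul0r subr0 in h2.
  have X0 : 0 < X by rewrite -(pmulr_lgt0 _ h1).
  by have := re_le_cabs (X, Y); rewrite /= -/r; lra.
have Y2 : 0 < Y ^+ 2 by rewrite exprn_even_gt0.
rewrite ltNge; apply/negP => h.
have h3 : r <= - X by lra.
have h4 : 0 <= - X by lra.
nra.
Qed.

Lemma abs_carg_le z : `|carg z| <= pi.
Proof.
rewrite /carg; set q := _ / _.
have h1 := atan_gtNpi2 q; have h2 := atan_ltpi2 q.
rewrite ler_norml; apply/andP; split; lra.
Qed.

(* carg z = 2 atan u with u = tan (Arg z / 2) = z.2 / (|z| + z.1); the half-angle
   formulas cos = (1 - u^2)/(1 + u^2), sin = 2u/(1 + u^2) recover z. *)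
Lemma polar z : 0 < cabs z + z.1 ->
  z.1 = cabs z * cos (carg z) /\ z.2 = cabs z * sin (carg z).
Proof.
move=> hp; have rp := cabs_gt0 hp; have r2 := cabs_sqr z.
rewrite /carg; case: z hp rp r2 => X Y /=.
set r := cabs (X, Y) => hp rp r2.
set u := Y / (r + X).
have rX0 : r + X != 0 by rewrite gt_eqF.
have hu : 1 + u ^+ 2 = 2 * r / (r + X).
  rewrite /u; have -> : 1 + (Y / (r + X)) ^+ 2 = ((r + X) ^+ 2 + Y ^+ 2) / (r + X) ^+ 2.
    by field.
  have -> : (r + X) ^+ 2 + Y ^+ 2 = 2 * r * (r + X) by nra.
  by field.
have hc : cos (atan u) ^+ 2 = (1 + u ^+ 2)^-1.
  by rewrite cos_atan exprVn sqr_sqrtr // addr_ge0 // sqr_ge0.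
have cne : cos (atan u) != 0.
  apply/eqP => h; move: hc; rewrite h expr0n /= => /esym/eqP.
  by rewrite invr_eq0 gt_eqF // ltr_pwDl // sqr_ge0.
have hs : sin (atan u) = u * cos (atan u).
  by have := atanK u; rewrite /tan => {2}<-; rewrite divfK.
rewrite mulr_natl cos_mulr2n sin_mulr2n hs.
have -> : cos (atan u) * (u * cos (atan u)) = u * cos (atan u) ^+ 2 by ring.
rewrite hc hu !mulr2n; split; rewrite /u; field; rewrite ?gt_eqF //.
Qed.

Lemma absLn_cinv z : 0 < cabs z + z.1 -> absLn (cinv z) = absLn z.
Proof.
move=> hp; have rp := cabs_gt0 hp; have r2 := cabs_sqr z.
rewrite /cinv -r2; case: z hp rp r2 => X Y /=.
set r := cabs (X, Y) => hp rp r2.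
have cm : cabs (X / r ^+ 2, - Y / r ^+ 2) = r^-1.
  have -> : r^-1 = Num.sqrt (r^-1 ^+ 2) by rewrite sqrtr_sqr gtr0_norm ?invr_gt0.
  rewrite /cabs /=; congr Num.sqrt.
  have -> : (X / r ^+ 2) ^+ 2 + (- Y / r ^+ 2) ^+ 2 = (X ^+ 2 + Y ^+ 2) / r ^+ 4.
    by field; rewrite gt_eqF.
  by rewrite -r2; field; rewrite gt_eqF.
rewrite /absLn /cLn /carg cm /=.
have -> : - Y / r ^+ 2 / (r^-1 + X / r ^+ 2) = - (Y / (r + X)).
  by field; rewrite !gt_eqF.
by rewrite atanN lnV ?posrE // mulrN /cabs /= !sqrrN.
Qed.

Lemma cabs_one_sub_le z : 0 < cabs z + z.1 ->
  cabs (1 - z.1, - z.2) <= expR (absLn z) - 1.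
Proof.
move=> hp; have [hX hY] := polar hp; have rp := cabs_gt0 hp.
set r := cabs z in hX hY rp; set t := carg z in hX hY.
have := expR_sub1_sqr_le (ln r) t; rewrite lnK ?posrE // -/(absLn z).
set E := expR _ => hk.
have E1 : 1 <= E by rewrite /E -expR0 ler_expR sqrtr_ge0.
have hc := one_sub_cos_le t.
have e : cabs (1 - z.1, - z.2) ^+ 2 = (r - 1) ^+ 2 + 2 * r * (1 - cos t).
  by rewrite cabs_sqr /= hX hY; have := cos2Dsin2 t; nra.
have h : cabs (1 - z.1, - z.2) ^+ 2 <= (E - 1) ^+ 2 by nra.
by have := cabs_ge0 (1 - z.1, - z.2); nra.
Qed.

End complex_pairs.

Lemma continuous_sum (R : realType) (T : topologicalType) m (F : 'I_m -> T -> R^o) :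
  (forall i, continuous (F i)) -> continuous (fun x => \sum_(i < m) F i x).
Proof.
elim: m F => [|m IH] F hF.
  under eq_fun do rewrite big_ord0; exact: cst_continuous.
under eq_fun do rewrite big_ord_recr /=.
by move=> x; apply: continuousD; [apply: IH => i; exact: hF | exact: hF].
Qed.

Section inner_product.
Variables (R : realType) (n : nat).
Implicit Types (P Q A : 'M[R]_n) (u v x : 'cV[R]_n).

Lemma normr_entry_le m k (M : 'M[R]_(m, k)) i j : `|M i j| <= `|M|.
Proof. by rewrite [leRHS]/Num.Def.normr /= mx_normrE; apply/bigmax_geP; right; exists (i, j). Qed.

Lemma normr_trmx m k (M : 'M[R]_(m, k)) : `|M^T| = `|M|.
Proof.
have le m' k' (N : 'M[R]_(m', k')) : `|N^T| <= `|N|.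
  rewrite [leLHS]/Num.Def.normr /= mx_normrE.
  by apply: bigmax_le => // -[i j] _; rewrite mxE normr_entry_le.
by apply/le_anti; rewrite le /= -{1}(trmxK M) le.
Qed.

Lemma ipE P u v : ip P u v = \sum_j (\sum_i u i 0 * P i j) * v j 0.
Proof. by rewrite /ip mxE; apply: eq_bigr => j _; rewrite !mxE; congr (_ * _); apply: eq_bigr => i _; rewrite mxE. Qed.

Lemma ipDl Q x y u : ip Q (x + y) u = ip Q x u + ip Q y u.
Proof. by rewrite /ip linearD /= !mulmxDl mxE. Qed.

Lemma ipZl Q a x u : ip Q (a *: x) u = a * ip Q x u.
Proof. by rewrite /ip linearZ /= -!scalemxAl mxE. Qed.

Lemma ipZr Q a x u : ip Q x (a *: u) = a * ip Q x u.
Proof. by rewrite /ip -scalemxAr mxE. Qed.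

Lemma ipNl Q x u : ip Q (- x) u = - ip Q x u.
Proof. by rewrite -scaleN1r ipZl mulN1r. Qed.

Lemma ip0l Q u : ip Q 0 u = 0.
Proof. by rewrite -(scale0r 0) ipZl mul0r. Qed.

Lemma ipC Q x y : Q^T = Q -> ip Q x y = ip Q y x.
Proof.
move=> hQ; rewrite /ip; have -> : (x^T *m Q *m y) 0 0 = (x^T *m Q *m y)^T 0 0.
  by rewrite [RHS]mxE.
by rewrite !trmx_mul trmxK hQ mulmxA.
Qed.

Lemma ip_mulmxl Q A u v : ip Q (A *m u) v = ip (A^T *m Q) u v.
Proof. by rewrite /ip trmx_mul !mulmxA. Qed.

Lemma ip_bounded P : exists2 K, 0 <= K & forall u v, `|ip P u v| <= K * (`|u| * `|v|).
Proof.
exists (\sum_j \sum_i `|P i j|); first by apply: sumr_ge0 => j _; apply: sumr_ge0.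
move=> u v; rewrite ipE; apply: le_trans (ler_norm_sum _ _ _) _.
rewrite mulr_suml; apply: ler_sum => j _; rewrite normrM mulrA.
apply: ler_pM => //; last exact: normr_entry_le.
apply: le_trans (ler_norm_sum _ _ _) _.
rewrite mulr_suml; apply: ler_sum => i _; rewrite normrM mulrC.
by apply: ler_wpM2l => //; exact: normr_entry_le.
Qed.

Lemma ip_continuous P : continuous (fun r : 'rV[R]_n => ip P r^T r^T).
Proof.
have -> : (fun r : 'rV[R]_n => ip P r^T r^T) =
          (fun r => \sum_j (\sum_i r 0 i * P i j) * r 0 j).
  apply: funext => r; rewrite ipE; apply: eq_bigr => j _; rewrite mxE.
  by congr (_ * _); apply: eq_bigr => i _; rewrite mxE.
apply: continuous_sum => j x; apply: continuousM; last exact: coord_continuous.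
move: x; apply: continuous_sum => i x; apply: continuousM; first exact: coord_continuous.
exact: cst_continuous.
Qed.

End inner_product.

(* The minimum of the form over the (compact) unit sphere is the coercivity constant. *)
Lemma ip_coercive (R : realType) n (P : 'M[R]_n) : (forall u, u != 0 -> 0 < ip P u u) ->
  exists2 c, 0 < c & forall u, c * `|u| ^+ 2 <= ip P u u.
Proof.
move=> Ppos; case: n P Ppos => [|m] P Ppos.
  by exists 1 => // u; rewrite (_ : u = 0) ?ip0l ?normr0 ?expr0n ?mulr0 //; apply/matrixP => -[].
set S := [set r : 'rV[R]_m.+1 | `|r| = 1].
have S0 : S !=set0.
  set e := const_mx 1 : 'rV[R]_m.+1.
  have e0 : e != 0 by apply/eqP => /matrixP/(_ 0 0); rewrite !mxE => /eqP; rewrite oner_eq0.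
  exists (`|e|^-1 *: e).
  by rewrite /S /= normrZ normrV ?unitfE ?normr_eq0 // normr_id mulVf // normr_eq0.
have cS : compact S.
  apply: bounded_closed_compact.
    by exists 1; split; [exact: num_real | move=> x x1 r /= ->; exact: ltW].
  rewrite (_ : S = (@Num.norm _ _) @^-1` [set x | x = 1]) //.
  by apply: preimage_closed; [move=> x _; exact: norm_continuous | exact: closed_eq].
have [r rS rmin] := compact_EVT_min S0 cS (continuous_subspaceT (ip_continuous (P:=P))).
have r0 : r^T != 0.
  apply/eqP => /(congr1 trmx); rewrite trmxK trmx0 => r0.
  by move: rS; rewrite inE /S /= r0 normr0 => /esym/eqP; rewrite oner_eq0.
exists (ip P r^T r^T); first exact: Ppos.
move=> u; have [->|u0] := eqVneq u 0; first by rewrite normr0 expr0n /= mulr0 ip0l.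
have nu0 : `|u| != 0 by rewrite normr_eq0.
have -> : ip P u u = `|u| ^+ 2 * ip P (`|u|^-1 *: u) (`|u|^-1 *: u).
  by rewrite ipZl ipZr; field.
rewrite mulrC ler_wpM2l ?exprn_ge0 //.
have := rmin (`|u|^-1 *: u)^T; rewrite trmxK; apply.
by rewrite inE /S /= normr_trmx normrZ normrV ?unitfE // normr_id mulVf.
Qed.

Section positive_operators.
Variables (R : realType) (n : nat) (Q : 'M[R]_n).
Implicit Types (S T : 'M[R]_n) (u v x y : 'cV[R]_n).

Lemma Lplus_coercive T : Lplus Q T ->
  exists2 c, 0 < c & forall u, c * `|u| ^+ 2 <= ip Q (T *m u) u.
Proof.
move=> hT; have [|c c0 hc] := @ip_coercive R n (T^T *m Q).
  by move=> u u0; rewrite -ip_mulmxl; exact: hT.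
by exists c => // u; rewrite ip_mulmxl.
Qed.

Lemma Lplus_ip_ge0 T u : Lplus Q T -> 0 <= ip Q (T *m u) u.
Proof.
move=> hT; have [->|u0] := eqVneq u 0; first by rewrite mulmx0 ip0l.
exact/ltW/hT.
Qed.

Lemma Lplus_qfC_re_gt0 T u v : Lplus Q T -> u != 0 \/ v != 0 -> 0 < (qfC Q T u v).1.
Proof.
move=> hT [u0|v0] /=.
  by have := hT u u0; have := Lplus_ip_ge0 v hT; lra.
by have := hT v v0; have := Lplus_ip_ge0 u hT; lra.
Qed.

Lemma Lplus_unitmx T : Lplus Q T -> T \in unitmx.
Proof.
move=> hT; rewrite unitmxE unitfE -det_tr; apply/negP => /det0P [v v0 hv].
have Tv : T *m v^T = 0 by rewrite -(trmxK T) -trmx_mul hv trmx0.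
have vT0 : v^T != 0 by apply: contraNneq v0 => /(congr1 trmx); rewrite trmxK trmx0 => ->.
by have := hT _ vT0; rewrite Tv ip0l ltxx.
Qed.

Lemma Lplus_invmx T : Q^T = Q -> Lplus Q T -> Lplus Q (invmx T).
Proof.
move=> hQ hT u u0; have Tu := Lplus_unitmx hT.
have w0 : invmx T *m u != 0.
  by apply: contraNneq u0 => w0; rewrite -(mulKVmx Tu u) w0 mulmx0 eqxx.
by rewrite -{2}(mulKVmx Tu u) ipC //; exact: hT.
Qed.

Lemma cabs_qfC_bounds T : Lplus Q T ->
  exists2 c, 0 < c & exists2 K, 0 < K & forall u v,
    c * (`|u| ^+ 2 + `|v| ^+ 2) <= cabs (qfC Q T u v) /\
    cabs (qfC Q T u v) <= K * (`|u| ^+ 2 + `|v| ^+ 2).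
Proof.
move=> hT; have [c c0 hc] := Lplus_coercive hT.
have [K K0 hK] := ip_bounded (T^T *m Q).
exists c => //; exists (2 * (K + 1)); first by rewrite mulr_gt0 // ltr_wpDl.
move=> u v.
have hK' w1 w2 : `|ip Q (T *m w1) w2| <= K * (`|w1| * `|w2|) by rewrite ip_mulmxl.
set a := `|u|; set b := `|v|; set s := a ^+ 2 + b ^+ 2.
have re_lb : c * s <= (qfC Q T u v).1 by rewrite /= mulrDr; apply: lerD; apply: hc.
have re_ub : `|(qfC Q T u v).1| <= K * s.
  rewrite /= /s !expr2 mulrDr; apply: le_trans (ler_normD _ _) _.
  by apply: lerD; apply: hK'.
have im_ub : `|(qfC Q T u v).2| <= K * s.
  have ab : 2 * (a * b) <= s by have := sqr_ge0 (a - b); rewrite /s; nra.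
  rewrite /=; apply: le_trans (ler_normB _ _) _; apply: le_trans _ (ler_wpM2l K0 ab).
  have -> : K * (2 * (a * b)) = K * (b * a) + K * (a * b) by ring.
  by apply: lerD; apply: hK'.
split; first exact: le_trans re_lb (re_le_cabs _).
apply: le_trans (cabs_le_norm _) _.
have s0 : 0 <= s by rewrite addr_ge0 ?sqr_ge0.
by have := lerD re_ub im_ub; nra.
Qed.

Lemma absLn_Wset_bounded S T : Lplus Q S -> Lplus Q T ->
  has_ubound [set absLn z | z in Wset Q S T].
Proof.
move=> hS hT.
have [cS cS0 [KS KS0 hSb]] := cabs_qfC_bounds hS.
have [cT cT0 [KT KT0 hTb]] := cabs_qfC_bounds hT.
exists (KS / cT + KT / cS + pi) => _ [_ [u [v [nz ->]]] <-].
have [NS1 NS2] := hSb u v; have [DT1 DT2] := hTb u v.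
set s := `|u| ^+ 2 + `|v| ^+ 2 in NS1 NS2 DT1 DT2.
have s0 : 0 < s.
  case: nz => h; rewrite /s.
    by apply: (lt_le_trans (_ : 0 < `|u| ^+ 2)); rewrite ?lerDl ?sqr_ge0 ?exprn_gt0 ?normr_gt0.
  by apply: (lt_le_trans (_ : 0 < `|v| ^+ 2)); rewrite ?lerDr ?sqr_ge0 ?exprn_gt0 ?normr_gt0.
set N := qfC Q S u v in NS1 NS2 *; set D := qfC Q T u v in DT1 DT2 *.
have N0 : 0 < cabs N by apply: lt_le_trans NS1; rewrite mulr_gt0.
have D0 : 0 < cabs D by apply: lt_le_trans DT1; rewrite mulr_gt0.
have xE := cabs_cdiv N (Lplus_qfC_re_gt0 hT nz).
set x := cabs (cdiv N D) in xE *.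
have x0 : 0 < x by rewrite xE divr_gt0.
have x_ub : x <= KS / cT.
  rewrite xE ler_pdivrMr // mulrAC ler_pdivlMr //.
  apply: le_trans (ler_wpM2r (ltW cT0) NS2) _.
  by rewrite -mulrA [s * _]mulrC ler_pM2l //; exact: DT1.
have xV_ub : x^-1 <= KT / cS.
  rewrite xE invf_div ler_pdivrMr // mulrAC ler_pdivlMr //.
  apply: le_trans (ler_wpM2r (ltW cS0) DT2) _.
  by rewrite -mulrA [s * _]mulrC ler_pM2l //; exact: NS1.
rewrite /absLn /cLn -/x; apply: le_trans (cabs_le_norm _) _ => /=.
rewrite lerD ?abs_carg_le //; apply: le_trans (abs_ln_le x0) _; exact: lerD.
Qed.

Lemma absLn_le_dsigma S T z : Lplus Q S -> Lplus Q T -> Wset Q S T z ->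
  absLn z <= dsigma Q S T.
Proof.
move=> hS hT hz; apply: sup_upper_bound; last by exists z.
by split; [exists (absLn z), z | exact: absLn_Wset_bounded].
Qed.

Lemma dsigma_ge0 S T : Lplus Q S -> Lplus Q T -> 0 <= dsigma Q S T.
Proof.
move=> hS hT; have [[z hz]|ne] := pselect (Wset Q S T !=set0).
  by apply: le_trans (absLn_le_dsigma hS hT hz); exact: cabs_ge0.
rewrite /dsigma (_ : [set absLn z | z in Wset Q S T] = set0) ?sup0 //.
by apply/seteqP; split => // y [z hz _]; apply: ne; exists z.
Qed.

Lemma qfC_cmul S T x y l :
  S *m x = l.1 *: (T *m x) - l.2 *: (T *m y) ->
  S *m y = l.2 *: (T *m x) + l.1 *: (T *m y) ->
  qfC Q S x y = cmul l (qfC Q T x y).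
Proof.
by move=> hx hy; rewrite /qfC /cmul /= hx hy !ipDl !ipNl !ipZl; congr (_, _); ring.
Qed.

End positive_operators.

Section eigenvalues.
Variables (R : realType) (n : nat) (Q : 'M[R]_n).
Implicit Types (A L G : 'M[R]_n) (l : R * R).

Lemma ceigen_one_sub A l : ceigen (1%:M - A) l -> ceigen A (1 - l.1, - l.2).
Proof.
move=> [x [y [nz [hx hy]]]]; exists x, y; split=> //=.
rewrite !mulmxBl !mul1mx in hx hy; split.
  have -> : A *m x = x - (x - A *m x) by rewrite opprB addrC subrK.
  by rewrite hx scalerBl scale1r scaleNr opprK opprB addrCA addrC.
have -> : A *m y = y - (y - A *m y) by rewrite opprB addrCA subrr addr0.
by rewrite hy scalerBl scale1r scaleNr opprD addrCA.
Qed.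

Hypothesis symQ : Q^T = Q.

Lemma ceigen_Wset_invmxl L G l : Lplus Q L -> Lplus Q G -> ceigen (L *m G) l ->
  0 < cabs l + l.1 /\ Wset Q (invmx L) G (cinv l).
Proof.
move=> hL hG [x [y [nz [hx hy]]]]; have Lu := Lplus_unitmx hL.
have Gx : G *m x = l.1 *: (invmx L *m x) - l.2 *: (invmx L *m y).
  by rewrite !scalemxAr -mulmxBr -hx -mulmxA mulKmx.
have Gy : G *m y = l.2 *: (invmx L *m x) + l.1 *: (invmx L *m y).
  by rewrite !scalemxAr -mulmxDr -hy -mulmxA mulKmx.
have qfG := qfC_cmul Q Gx Gy.
have hN := Lplus_qfC_re_gt0 (Lplus_invmx symQ hL) nz.
have hD := Lplus_qfC_re_gt0 hG nz; rewrite qfG in hD.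
have lpos := cabs_add_re_gt0 hN hD.
split => //; exists x, y; split => //.
by rewrite qfG cdiv_cmulr // cabs_gt0.
Qed.

Lemma ceigen_Wset_invmxr L G l : Lplus Q G -> ceigen (L *m G) l ->
  Wset Q L (invmx G) l.
Proof.
move=> hG [x [y [nz [hx hy]]]]; have Gu := Lplus_unitmx hG.
have Lx : L *m (G *m x) = l.1 *: (invmx G *m (G *m x)) - l.2 *: (invmx G *m (G *m y)).
  by rewrite !mulKmx // mulmxA hx.
have Ly : L *m (G *m y) = l.2 *: (invmx G *m (G *m x)) + l.1 *: (invmx G *m (G *m y)).
  by rewrite !mulKmx // mulmxA hy.
have nz' : G *m x != 0 \/ G *m y != 0.
  case: nz => h; [left | right]; apply: contraNneq h => h0.
    by rewrite -(mulKmx Gu x) h0 mulmx0 eqxx.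
  by rewrite -(mulKmx Gu y) h0 mulmx0 eqxx.
exists (G *m x), (G *m y); split => //.
by rewrite (qfC_cmul Q Lx Ly) cdiv_cmull //; exact: Lplus_qfC_re_gt0 (Lplus_invmx symQ hG) nz'.
Qed.

Lemma absLn_ceigen_le L G l : Lplus Q L -> Lplus Q G -> ceigen (L *m G) l ->
  0 < cabs l + l.1 /\
  absLn l <= Num.min (dsigma Q (invmx L) G) (dsigma Q L (invmx G)).
Proof.
move=> hL hG hl; have [lpos W1] := ceigen_Wset_invmxl hL hG hl.
split => //; rewrite le_min; apply/andP; split.
  by rewrite -absLn_cinv //; exact: absLn_le_dsigma (Lplus_invmx symQ hL) hG W1.
exact: absLn_le_dsigma hL (Lplus_invmx symQ hG) (ceigen_Wset_invmxr hG hl).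
Qed.

End eigenvalues.

Theorem lemmaA2 (R : realType) (n : nat) (Q : 'M[R]_n) (delta : R) (L G : 'M[R]_n) :
  is_inner_product Q -> 0 < delta -> Lplus Q L -> Lplus Q G ->
  Num.min (dsigma Q (invmx L) G) (dsigma Q L (invmx G)) <= delta ->
  specrad (1%:M - L *m G) <=
    (expR delta - 1) / delta * Num.min (dsigma Q (invmx L) G) (dsigma Q L (invmx G)).
Proof.
move=> [symQ _] delta0 hL hG hmin.
have [hLi hGi] := (Lplus_invmx symQ hL, Lplus_invmx symQ hG).
set m := Num.min _ _ in hmin *.
have m0 : 0 <= m by rewrite le_min !dsigma_ge0.
have c0 : 0 <= (expR delta - 1) / delta.
  by apply: divr_ge0; rewrite ?subr_ge0 -?expR0 ?ler_expR ltW.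
apply: sup_le_nonneg; last exact: mulr_ge0.
move=> _ [mu /ceigen_one_sub hl <-].
have [lpos lm] := absLn_ceigen_le symQ hL hG hl.
set l := (1 - mu.1, - mu.2) in lpos lm.
have := cabs_one_sub_le lpos; rewrite /= subKr opprK -surjective_pairing => /le_trans; apply.
apply: le_trans (expR_sub1_le_chord (cabs_ge0 _) (le_trans lm hmin) delta0) _.
by rewrite -mulrA mulrC [_^-1 * _]mulrC; exact: ler_wpM2l.
Qed.
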